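(* Let $\alpha\in(0,1)$, $a,b\in\mathbb{R}$, $\tau>0$, and $Q(s)=s^\alpha-a-b e^{-s\tau}$ (principal branch of $s^\alpha$). There is no $s\in\mathbb{C}\setminus\{0\}$ (in the domain of $Q$) with $Q(s)=Q'(s)=Q''(s)=Q'''(s)=0$.
   Context: $s^\alpha=|s|^\alpha e^{i\alpha\arg s}$ with $\arg s\in(-\pi,\pi)$; derivatives are complex derivatives in $s$. *)

From Stdlib Require Import Reals.
Open Scope R_scope.

Definition Cpx : Type := (R * R)%type.
Definition Cre (z : Cpx) : R := fst z.
Definition Cim (z : Cpx) : R := snd z.
Definition RtoC (x : R) : Cpx := (x, 0).
Definition C0 : Cpx := (0, 0).
Definition Cadd (z w : Cpx) : Cpx := (Cre z + Cre w, Cim z + Cim w).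
Definition Copp (z : Cpx) : Cpx := (- Cre z, - Cim z).
Definition Csub (z w : Cpx) : Cpx := Cadd z (Copp w).
Definition Cmul (z w : Cpx) : Cpx :=
  (Cre z * Cre w - Cim z * Cim w, Cre z * Cim w + Cim z * Cre w).
Definition Cnorm (z : Cpx) : R := sqrt (Cre z * Cre z + Cim z * Cim z).
Definition Cinv (z : Cpx) : Cpx :=
  let d := Cre z * Cre z + Cim z * Cim z in (Cre z / d, - Cim z / d).
Definition Cdiv (z w : Cpx) : Cpx := Cmul z (Cinv w).
Definition Cexp (z : Cpx) : Cpx := (exp (Cre z) * cos (Cim z), exp (Cre z) * sin (Cim z)).

(* principal argument (atan2), with values in (-pi, pi] *)
Definition Carg (z : Cpx) : R :=
  let x := Cre z in let y := Cim z in
  match Rlt_dec 0 x with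
  | left _ => atan (y / x)
  | right _ =>
    match Rlt_dec x 0 with
    | left _ => match Rle_dec 0 y with
                | left _ => atan (y / x) + PI
                | right _ => atan (y / x) - PI
                end
    | right _ => match Rlt_dec 0 y with
                 | left _ => PI / 2
                 | right _ => match Rlt_dec y 0 with
                              | left _ => - (PI / 2)
                              | right _ => 0
                              end
                 end
    end
  end.

(* domain of the principal branch: arg s in (-pi, pi), s <> 0,
   i.e. Cpx minus the closed negative real half-line *)
Definition in_dom (z : Cpx) : Prop := z <> C0 /\ - PI < Carg z < PI.

Definition Cpow (s : Cpx) (alpha : R) : Cpx :=
  let r := Rpower (Cnorm s) alpha in let t := alpha * Carg s in
  (r * cos t, r * sin t).

Definition has_cderiv (f : Cpx -> Cpx) (z L : Cpx) : Prop :=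
  forall eps : R, 0 < eps -> exists delta : R, 0 < delta /\
    forall h : Cpx, h <> C0 -> Cnorm h < delta ->
      Cnorm (Csub (Cdiv (Csub (f (Cadd z h)) (f z)) h) L) < eps.

Definition Qfun (alpha a b tau : R) (s : Cpx) : Cpx :=
  Csub (Csub (Cpow s alpha) (RtoC a))
       (Cmul (RtoC b) (Cexp (Cmul (Copp s) (RtoC tau)))).

(* Differentiating along the ray t |-> (1 + t) w only needs real derivatives, and it shows
   that every derivative of Q has the form c0 + A w^(alpha - k) + B e^(-w tau): from
   Q^(k) = c0 + A w^(alpha-k) + B e^(-w tau) one gets Q^(k+1) = (alpha - k) A w^(alpha-k-1)
   - tau B e^(-w tau).  With m = w^(alpha-1), v = 1/w and e = tau b e^(-w tau), the
   equations Q' = Q'' = Q''' = 0 read alpha m + e = 0, (alpha-1) alpha m v - tau e = 0 and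
   (alpha-1)(alpha-2) alpha m v^2 + tau^2 e = 0.  Eliminating e gives (alpha-1) v = -tau and
   (alpha-1)(alpha-2) v^2 = tau^2, whence tau^2 = 0. *)

From Pilot Require Import Defs.
From Stdlib Require Import Reals Lra.
From Coquelicot Require Import Coquelicot.
Open Scope R_scope.

(* Coquelicot's [C] is [Cpx] with the same operations, except that [Cinv] and [Cmod] are
   written with [x ^ 2]; Coquelicot's [Cpow] (natural powers) shadows [Defs.Cpow]. *)

Lemma Cinv_Defs (z : C) : Defs.Cinv z = Cinv z.
Proof. destruct z as [x y]; unfold Defs.Cinv, Cinv, Cre, Cim; simpl; now rewrite !Rmult_1_r. Qed.

Lemma Cnorm_Cmod (z : C) : Cnorm z = Cmod z.
Proof. destruct z as [x y]; unfold Cnorm, Cmod, Cre, Cim; simpl; now rewrite !Rmult_1_r. Qed.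

Lemma RtoC_Cmult (c : R) (z : C) : (c * z)%C = (c * fst z, c * snd z).
Proof. destruct z as [x y]; unfold Cmult; simpl; f_equal; ring. Qed.

Lemma Carg_scal (c : R) (z : C) : 0 < c -> Carg (c * z)%C = Carg z.
Proof.
  intro Hc; rewrite RtoC_Cmult; destruct z as [x y]; unfold Carg, Cre, Cim; simpl.
  destruct (Rlt_dec 0 (c * x)), (Rlt_dec 0 x); try nra.
  { f_equal; field; lra. }
  destruct (Rlt_dec (c * x) 0), (Rlt_dec x 0); try nra.
  - destruct (Rle_dec 0 (c * y)), (Rle_dec 0 y); try nra; f_equal; f_equal; field; lra.
  - destruct (Rlt_dec 0 (c * y)), (Rlt_dec 0 y); try nra; auto.
    destruct (Rlt_dec (c * y) 0), (Rlt_dec y 0); try nra; auto.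
Qed.

Lemma Cpow_scal (c al : R) (z : C) : 0 < c -> z <> 0%C ->
  Defs.Cpow (c * z)%C al = (Rpower c al * Defs.Cpow z al)%C.
Proof.
  intros Hc Hz; unfold Defs.Cpow.
  rewrite Carg_scal, !Cnorm_Cmod, Cmod_mult, Cmod_R, Rabs_pos_eq by lra.
  rewrite <- Rpower_mult_distr by (try apply Cmod_gt_0; auto).
  rewrite RtoC_Cmult; simpl; f_equal; ring.
Qed.

Lemma in_dom_scal (c : R) (z : C) : 0 < c -> in_dom z -> in_dom (c * z)%C.
Proof.
  intros Hc [Hz Harg]; split.
  - apply Cmult_neq_0; auto. intro H; apply RtoC_inj in H; lra.
  - now rewrite Carg_scal.
Qed.

Definition Cpow_sub (al : R) (k : nat) (w : C) : C := (Defs.Cpow w al * (/ w) ^ k)%C.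

Lemma Cpow_sub_S (al : R) (k : nat) (w : C) :
  Cpow_sub al (S k) w = (Cpow_sub al k w * / w)%C.
Proof. unfold Cpow_sub; rewrite Cpow_S; ring. Qed.

Lemma Cpow_sub_scal (al c : R) (k : nat) (w : C) : 0 < c -> w <> 0%C ->
  Cpow_sub al k (c * w)%C = (RtoC (Rpower c al / c ^ k) * Cpow_sub al k w)%C.
Proof.
  intros Hc Hw; assert (Hc0 : RtoC c <> 0%C) by (intro H; apply RtoC_inj in H; lra).
  assert (Hck : (c * w)%C <> 0%C) by (apply Cmult_neq_0; auto).
  unfold Cpow_sub; rewrite Cpow_scal, !Cpow_inv, Cpow_mult_l, RtoC_div, RtoC_pow
    by (auto; apply pow_nonzero; lra).
  field; split; apply Cpow_nz; auto.
Qed.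

Lemma Cpow_neq_0 (al : R) (w : C) : Defs.Cpow w al <> C0.
Proof.
  unfold Defs.Cpow; intro H; injection H as H1 H2.
  assert (Hr : 0 < Rpower (Cnorm w) al) by apply exp_pos.
  pose proof (sin2_cos2 (al * Carg w)); unfold Rsqr in *; nra.
Qed.

Lemma Cpow_sub_neq_0 (al : R) (k : nat) (w : C) : w <> 0%C -> Cpow_sub al k w <> 0%C.
Proof.
  intro Hw; apply Cmult_neq_0; [apply Cpow_neq_0 | apply Cpow_nz].
  apply Cmod_gt_0; rewrite Cmod_inv by auto; apply Rinv_0_lt_compat, Cmod_gt_0, Hw.
Qed.

Definition is_derive_C (F : R -> C) (t : R) (l : C) : Prop :=
  is_derive (fun u => Re (F u)) t (Re l) /\ is_derive (fun u => Im (F u)) t (Im l).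

Lemma is_derive_C_unique (F : R -> C) (t : R) (l1 l2 : C) :
  is_derive_C F t l1 -> is_derive_C F t l2 -> l1 = l2.
Proof.
  intros [Hr1 Hi1] [Hr2 Hi2]; apply injective_projections;
    [change (Re l1 = Re l2) | change (Im l1 = Im l2)].
  - now rewrite <- (is_derive_unique _ _ _ Hr1), (is_derive_unique _ _ _ Hr2).
  - now rewrite <- (is_derive_unique _ _ _ Hi1), (is_derive_unique _ _ _ Hi2).
Qed.

Lemma is_derive_C_ext_loc (F G : R -> C) (t : R) (l : C) :
  locally t (fun u => F u = G u) -> is_derive_C F t l -> is_derive_C G t l.
Proof.
  intros Hloc [Hr Hi]; split; eapply is_derive_ext_loc; eauto;
    eapply filter_imp; eauto; intros u ->; reflexivity.
Qed.

Lemma is_derive_C_plus (F G : R -> C) (t : R) (l m : C) :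
  is_derive_C F t l -> is_derive_C G t m -> is_derive_C (fun u => F u + G u)%C t (l + m)%C.
Proof.
  intros [Fr Fi] [Gr Gi]; split;
    [exact (is_derive_plus _ _ _ _ _ Fr Gr) | exact (is_derive_plus _ _ _ _ _ Fi Gi)].
Qed.

Lemma is_derive_C_const (c : C) (t : R) : is_derive_C (fun _ => c) t 0%C.
Proof. split; [exact (is_derive_const (Re c) t) | exact (is_derive_const (Im c) t)]. Qed.

Lemma is_derive_C_Cmult_l (A : C) (F : R -> C) (t : R) (l : C) :
  is_derive_C F t l -> is_derive_C (fun u => A * F u)%C t (A * l)%C.
Proof.
  intros [Fr Fi]; split.
  - exact (is_derive_minus _ _ _ _ _ (is_derive_scal _ _ (Re A) _ Fr)
                                     (is_derive_scal _ _ (Im A) _ Fi)).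
  - exact (is_derive_plus _ _ _ _ _ (is_derive_scal _ _ (Re A) _ Fi)
                                    (is_derive_scal _ _ (Im A) _ Fr)).
Qed.

Lemma is_derive_C_RtoC (phi : R -> R) (t dphi : R) :
  is_derive phi t dphi -> is_derive_C (fun u => RtoC (phi u)) t (RtoC dphi).
Proof. intro H; split; [exact H | exact (is_derive_const 0 t)]. Qed.

Lemma Cdiv_RtoC (z : C) (h : R) : h <> 0 -> (z / h)%C = (RtoC (/ h) * z)%C.
Proof. intro Hh; rewrite RtoC_inv by auto; field; intro H; apply RtoC_inj in H; auto. Qed.

Lemma Im_le_Cmod (z : C) : Rabs (Im z) <= Cmod z.
Proof. eapply Rle_trans; [apply Rmax_r | apply Rmax_Cmod]. Qed.

Lemma is_derive_C_Cmod (F : R -> C) (t : R) (l : C) :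
  (forall eps, 0 < eps -> exists delta : posreal, forall h, h <> 0 -> Rabs h < delta ->
     Cmod ((F (t + h)%R - F t) / h - l)%C < eps) ->
  is_derive_C F t l.
Proof.
  intro H; split; apply is_derive_Reals; intros eps He; destruct (H eps He) as [d Hd];
    exists d; intros h Hh0 Hh; specialize (Hd h Hh0 Hh); rewrite Cdiv_RtoC in Hd by auto;
    eapply Rle_lt_trans; [| exact Hd | | exact Hd].
  - eapply Rle_trans; [| apply re_le_Cmod]; right; f_equal; unfold Re; simpl; field; auto.
  - eapply Rle_trans; [| apply Im_le_Cmod]; right; f_equal; unfold Im; simpl; field; auto.
Qed.

Lemma has_cderiv_Cmod (f : C -> C) (z L : C) : has_cderiv f z L ->
  forall eps, 0 < eps -> exists delta, 0 < delta /\
    forall h : C, h <> 0%C -> Cmod h < delta -> Cmod ((f (z + h) - f z) / h - L)%C < eps.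
Proof.
  intros H eps He; destruct (H eps He) as [d [Hd Hf]]; exists d; split; auto.
  intros h Hh Hhd; rewrite <- Cnorm_Cmod; unfold Cdiv; rewrite <- Cinv_Defs.
  apply Hf; [exact Hh | now rewrite Cnorm_Cmod].
Qed.

Lemma is_derive_C_ray (f : C -> C) (z L : C) : z <> 0%C -> has_cderiv f z L ->
  is_derive_C (fun t => f ((1 + t)%R * z)%C) 0 (z * L)%C.
Proof.
  intros Hz HL; apply is_derive_C_Cmod; intros eps He.
  assert (Hmz : 0 < Cmod z) by now apply Cmod_gt_0.
  destruct (has_cderiv_Cmod _ _ _ HL (eps / Cmod z)) as [d [Hd Hf]];
    [now apply Rdiv_lt_0_compat |].
  exists (mkposreal (d / Cmod z) (Rdiv_lt_0_compat _ _ Hd Hmz)); simpl; intros h Hh0 Hh.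
  assert (Hh0' : RtoC h <> 0%C) by (intro H; apply RtoC_inj in H; auto).
  rewrite Rplus_0_l, Rplus_0_r.
  replace ((f ((1 + h)%R * z) - f (1 * z)) / h - z * L)%C
    with (z * ((f (z + h * z) - f z) / (h * z) - L))%C.
  2: { rewrite RtoC_plus; replace (1 * z)%C with z by ring.
       replace ((1 + h) * z)%C with (z + h * z)%C by ring.
       field; auto. }
  rewrite Cmod_mult; replace eps with (Cmod z * (eps / Cmod z)) by (field; lra).
  apply Rmult_lt_compat_l, Hf; auto; [apply Cmult_neq_0; auto |].
  rewrite Cmod_mult, Cmod_R; apply (Rmult_lt_reg_r (/ Cmod z)); [now apply Rinv_0_lt_compat |].
  replace (Rabs h * Cmod z * / Cmod z) with (Rabs h) by (field; lra); exact Hh.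
Qed.

Lemma locally_ray_pos : locally 0 (fun t => 0 < 1 + t).
Proof. apply (locally_interval _ 0 (-1) p_infty); simpl; auto; intros; lra. Qed.

Lemma is_derive_C_Cpow_sub_ray (al : R) (k : nat) (w : C) : w <> 0%C ->
  is_derive_C (fun t => Cpow_sub al k ((1 + t)%R * w)%C) 0
    ((al - INR k)%R * Cpow_sub al k w)%C.
Proof.
  intro Hw; rewrite Cmult_comm.
  apply (is_derive_C_ext_loc
           (fun t => Cpow_sub al k w * RtoC (Rpower (1 + t) al / (1 + t) ^ k))%C).
  { eapply filter_imp; [| exact locally_ray_pos]; intros t Ht.
    rewrite Cpow_sub_scal by auto; apply Cmult_comm. }
  apply is_derive_C_Cmult_l, is_derive_C_RtoC; unfold Rpower.
  auto_derive.
  - rewrite Rplus_0_r, pow1; repeat split; lra.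
  - rewrite Rplus_0_r, ln_1, Rmult_0_r, exp_0, !pow1; field.
Qed.

Lemma is_derive_C_Cexp_ray (tau : R) (w : C) :
  is_derive_C (fun t => Cexp (- ((1 + t)%R * w) * tau)%C) 0
    (- (tau * w) * Cexp (- w * tau))%C.
Proof.
  destruct w as [x y]; split;
    [apply (is_derive_ext (fun t => exp (- ((1 + t) * x * tau)) * cos (- ((1 + t) * y * tau))))
    |apply (is_derive_ext (fun t => exp (- ((1 + t) * x * tau)) * sin (- ((1 + t) * y * tau))))];
    try (intro t; unfold Cexp, Cre, Cim; simpl; f_equal; f_equal; ring);
    auto_derive; auto; unfold Cexp, Cre, Cim; simpl;
    replace (- x * tau - - y * 0) with (- ((1 + 0) * x * tau)) by ring;
    replace (- x * 0 + - y * tau) with (- ((1 + 0) * y * tau)) by ring; ring.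
Qed.

(* c0 + A w^(al - k) + B e^(-w tau), the common shape of Q and of its derivatives. *)
Definition Qterm (al tau : R) (k : nat) (A B c0 : C) (w : C) : C :=
  (c0 + A * Cpow_sub al k w + B * Cexp (- w * tau))%C.

Lemma is_derive_C_Qterm_ray (al tau : R) (k : nat) (A B c0 w : C) : w <> 0%C ->
  is_derive_C (fun t => Qterm al tau k A B c0 ((1 + t)%R * w)%C) 0
    (w * Qterm al tau (S k) ((al - INR k)%R * A) (- tau * B) 0 w)%C.
Proof.
  intro Hw.
  replace (w * Qterm al tau (S k) ((al - INR k)%R * A) (- tau * B) 0 w)%C
    with (0 + A * ((al - INR k)%R * Cpow_sub al k w) + B * (- (tau * w) * Cexp (- w * tau)))%C
    by (unfold Qterm; rewrite Cpow_sub_S; field; auto).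
  unfold Qterm; repeat apply is_derive_C_plus.
  - apply is_derive_C_const.
  - now apply is_derive_C_Cmult_l, is_derive_C_Cpow_sub_ray.
  - apply is_derive_C_Cmult_l, is_derive_C_Cexp_ray.
Qed.

Lemma Qterm_derivative (al tau : R) (k : nat) (A B c0 : C) (f g : C -> C) :
  (forall w, in_dom w -> f w = Qterm al tau k A B c0 w) ->
  (forall w, in_dom w -> has_cderiv f w (g w)) ->
  forall w, in_dom w -> g w = Qterm al tau (S k) ((al - INR k)%R * A) (- tau * B) 0 w.
Proof.
  intros Hf Hg w Hw; assert (Hw0 : w <> C0) by apply Hw.
  assert (Hwg : (w * g w)%C
                = (w * Qterm al tau (S k) ((al - INR k)%R * A) (- tau * B) 0 w)%C).
  { apply (is_derive_C_unique (fun t => f ((1 + t)%R * w)%C) 0).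
    - now apply is_derive_C_ray, Hg.
    - eapply is_derive_C_ext_loc; [| now apply is_derive_C_Qterm_ray].
      eapply filter_imp; [| exact locally_ray_pos]; intros t Ht.
      symmetry; apply Hf, in_dom_scal, Hw; exact Ht. }
  replace (g w) with (/ w * (w * g w))%C by (field; auto).
  rewrite Hwg; field; auto.
Qed.

Lemma Cmult_eq_0_r (x y : C) : x <> 0%C -> (x * y = 0)%C -> y = 0%C.
Proof. intros Hx Hxy; replace y with (/ x * (x * y))%C by (field; auto); rewrite Hxy; ring. Qed.

Lemma no_triple_vanishing (al tau : R) (A m v e : C) :
  tau <> 0 -> (A * m)%C <> 0%C ->
  (A * m + e = 0)%C ->
  ((al - 1) * A * m * v - tau * e = 0)%C ->
  ((al - 1) * (al - 2) * A * m * v * v + tau * tau * e = 0)%C -> False.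
Proof.
  intros Htau Ham E1 E2 E3.
  assert (Hv : ((al - 1) * v + tau = 0)%C).
  { apply (Cmult_eq_0_r (A * m)); auto.
    replace (A * m * ((al - 1) * v + tau))%C
      with ((al - 1) * A * m * v - tau * e + tau * (A * m + e))%C by ring.
    rewrite E1, E2; ring. }
  assert (Hv2 : ((al - 1) * (al - 2) * v * v - tau * tau = 0)%C).
  { apply (Cmult_eq_0_r (A * m)); auto.
    replace (A * m * ((al - 1) * (al - 2) * v * v - tau * tau))%C
      with ((al - 1) * (al - 2) * A * m * v * v + tau * tau * e - tau * tau * (A * m + e))%C
      by ring.
    rewrite E1, E3; ring. }
  assert (Htau2 : (tau * tau = 0)%C).
  { replace (tau * tau)%C with ((al - 2) * ((al - 1) * v + tau) * ((al - 1) * v - tau)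
                                - (al - 1) * ((al - 1) * (al - 2) * v * v - tau * tau))%C
      by ring.
    rewrite Hv, Hv2; ring. }
  assert (Htau' : RtoC tau <> 0%C) by (intro H; apply RtoC_inj in H; auto).
  exact (Cmult_neq_0 _ _ Htau' Htau' Htau2).
Qed.

Theorem lemma3p1 (alpha a b tau : R) (halpha : 0 < alpha < 1) (htau : 0 < tau)
  (Q1 Q2 Q3 : Cpx -> Cpx)
  (hQ1 : forall z, in_dom z -> has_cderiv (Qfun alpha a b tau) z (Q1 z))
  (hQ2 : forall z, in_dom z -> has_cderiv Q1 z (Q2 z))
  (hQ3 : forall z, in_dom z -> has_cderiv Q2 z (Q3 z)) :
  ~ (exists s : Cpx, in_dom s /\
       Qfun alpha a b tau s = C0 /\ Q1 s = C0 /\ Q2 s = C0 /\ Q3 s = C0).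
Proof.
  intros [s [Hs [_ [H1 [H2 H3]]]]].
  assert (F0 : forall w, in_dom w ->
                 @eq C (Qfun alpha a b tau w) (Qterm alpha tau 0 1 (- b) (- a) w)).
  { intros w _; change (Qfun alpha a b tau w)
      with (Defs.Cpow w alpha - a - b * Cexp (- w * tau))%C.
    unfold Qterm, Cpow_sub; simpl; ring. }
  pose proof (Qterm_derivative _ _ _ _ _ _ _ _ F0 hQ1) as F1.
  pose proof (Qterm_derivative _ _ _ _ _ _ _ _ F1 hQ2) as F2.
  pose proof (Qterm_derivative _ _ _ _ _ _ _ _ F2 hQ3) as F3.
  rewrite F1 in H1 by exact Hs; rewrite F2 in H2 by exact Hs; rewrite F3 in H3 by exact Hs.
  unfold Qterm in H1, H2, H3; simpl INR in H1, H2, H3.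
  rewrite (Cpow_sub_S alpha 1) in H2; rewrite (Cpow_sub_S alpha 2), (Cpow_sub_S alpha 1) in H3.
  change C0 with (RtoC 0) in H1, H2, H3.
  apply (no_triple_vanishing alpha tau alpha (Cpow_sub alpha 1 s) (/ s)%C
           (tau * b * Cexp (- s * tau))%C).
  - lra.
  - apply Cmult_neq_0; [intro H; apply RtoC_inj in H; lra | apply Cpow_sub_neq_0, Hs].
  - rewrite <- H1; rewrite ?RtoC_minus; ring.
  - rewrite <- H2; rewrite ?RtoC_minus; ring.
  - rewrite <- H3; rewrite ?RtoC_minus, ?RtoC_plus; ring.
Qed.
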